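(* Let $n\in\mathbb{N}$, let $c=(c_{i,j})$ be an $n\times(n+1)$ matrix with entries in $\{0,1\}$, $\sigma_1,\ldots,\sigma_n>0$, and $\gamma_1,\ldots,\gamma_{n+1}>0$ with $\sum_jc_{i,j}\gamma_j>0$ for every $i$. Let $\boldsymbol{\Lambda}=(\Lambda_1,\ldots,\Lambda_{n+1})'$ have independent coordinates $\Lambda_j\sim Ga(\gamma_j,1)$. Let $W_{i,j}$, $i=1,\ldots,n$, $j=1,\ldots,n+1$, be random variables that are exponential with randomized rates, $W_{i,j}*\Lambda_j$: conditionally on $\boldsymbol{\Lambda}=(\lambda_1,\ldots,\lambda_{n+1})$, the $W_{i,j}$ are mutually independent and $W_{i,j}\sim Exp(\lambda_j)$. Set, for $i=1,\ldots,n$, \[ X_i=\sigma_i\min_{j\in\{1,\ldots,n+1\}:\,c_{i,j}\ne0}\left(W_{i,j}*\Lambda_j\right). \] Then $\mathbf{X}=(X_1,\ldots,X_n)'$ satisfies \[ \mathbf{P}[X_1>x_1,\ldots,X_n>x_n]=\prod_{j=1}^{n+1}\left(1+\sum_{i=1}^n\frac{c_{i,j}}{\sigma_i}x_i\right)^{-\gamma_j},\quad (x_1,\ldots,x_n)'\in(0,\infty)^n. \]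
   Context: $Exp(\lambda)$ is the exponential distribution with rate $\lambda$; $Ga(\gamma,1)$ is the gamma distribution with shape $\gamma$ and rate $1$. The mixture operator $*$: for a family $X_\lambda\sim C(\cdot;\lambda)$ and a random parameter $\Lambda\sim H$, $X_\lambda*\Lambda$ denotes the random variable $X_\Lambda$, i.e. with conditional law $C(\cdot;\lambda)$ given $\Lambda=\lambda$. *)

From HB Require Import structures.
From mathcomp Require Import all_boot all_order all_algebra.
From mathcomp Require Import all_classical all_reals all_analysis.
Set Implicit Arguments. Unset Strict Implicit. Unset Printing Implicit Defensive.
Import Order.TTheory GRing.Theory Num.Theory.
Local Open Scope classical_set_scope.
Local Open Scope ring_scope.

Definition Gamma_fun (R : realType) (g : R) : R :=
  fine (\int[lebesgue_measure]_(t in (`]0%R, +oo[%classic : set R))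
          (t `^ (g - 1) * expR (- t))%:E)%E.

Definition gamma_pdf (R : realType) (g : R) (x : R) : R :=
  if 0 < x then x `^ (g - 1) * expR (- x) / Gamma_fun g else 0.

From HB Require Import structures.
From mathcomp Require Import all_boot all_order all_algebra.
From mathcomp Require Import all_classical all_reals all_analysis.
From mathcomp Require Import exponential_distribution measurable_realfun ring.
Import Order.TTheory GRing.Theory Num.Theory numFieldTopology.Exports.
Local Open Scope classical_set_scope.
Local Open Scope ring_scope.

(* Conditionally on Lam = lam, the event {X_i > x_i for all i} is
   {W_{i,j} > x_i / sigma_i whenever c_{i,j} = 1}, of conditional probability
   prod_j exp(- lam_j s_j) with s_j = sum_i c_{i,j} x_i / sigma_i.  Integrating
   against Ga(gam_j, 1), the dilation u = (1 + s_j) lam of Lebesgue measure turns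
   the j-th factor into (1 + s_j)^(-gam_j).  The normalisation of the gamma
   densities is not proved from scratch: it is forced by the law hypothesis
   applied to the sure event. *)

Section lebesgue_dilation.
Context {R : realType}.
Local Notation mu := (@lebesgue_measure R).
Variable k : R.
Hypothesis k_gt0 : 0 < k.

Let mulk_measurable : measurable_fun [set: measurableTypeR R]
  ( *%R k : measurableTypeR R -> measurableTypeR R).
Proof. exact: mulrl_measurable. Qed.

Let mu_mulk : {measure set (measurableTypeR R) -> \bar R} :=
  measure_function_pushforward__canonical__measure_function_Measure
    mu mulk_measurable.

Lemma mulr_preimage_itvoc (a b : R) :
  *%R k @^-1` `]a, b] = `]a / k, b / k]%classic.
Proof.
apply/seteqP; split => x /=; rewrite !in_itv /= ltr_pdivrMr // ler_pdivlMr //;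
  by rewrite ![x * k]mulrC.
Qed.

Lemma lebesgue_measure_dilation (A : set R) : measurable A ->
  (pushforward mu ( *%R k) A = (k^-1)%:E * mu A)%E.
Proof.
move=> mA.
have -> : mu A = mscale (NngNum (ltW k_gt0)) mu_mulk A.
  apply: lebesgue_measure_unique => // _ [[a b]] _ <-.
  change (mu `]a, b] = k%:E * mu ( *%R k @^-1` `]a, b]))%E.
  rewrite mulr_preimage_itvoc !lebesgue_measure_itv /=.
  rewrite !lte_fin ltr_pM2r ?invr_gt0 //.
  case: ifP => _; last by rewrite mule0.
  by rewrite -EFinD -EFinM -mulrBl mulrCA divff ?mulr1 // gt_eqF.
by rewrite /mscale /= muleA -EFinM mulVf ?mul1e // gt_eqF.
Qed.

Lemma ge0_integral_dilation (f : R -> \bar R) :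
  measurable_fun setT f -> (forall x, (0 <= f x)%E) ->
  (\int[mu]_x f (k * x)%R = (k^-1)%:E * \int[mu]_x f x)%E.
Proof.
move=> mf f0.
have -> : (\int[mu]_x f (k * x)%R = \int[mu_mulk]_x f x)%E.
  by rewrite ge0_integral_pushforward.
have kV0 : 0 <= k^-1 by rewrite invr_ge0 ltW.
rewrite (eq_measure_integral (mscale (NngNum kV0) mu)); last first.
  by move=> B mB _; exact: lebesgue_measure_dilation.
by rewrite ge0_integral_mscale.
Qed.

End lebesgue_dilation.

Section exponential_tails.
Context {R : realType}.
Local Notation mu := (@lebesgue_measure R).

Lemma exponential_pdf_tail (l a : R) : 0 < l -> 0 <= a ->
  (\int[mu]_(w in `]a, +oo[) (exponential_pdf l w)%:E = (expR (- l * a))%:E)%E.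
Proof.
move=> l_gt0 a_ge0.
have cexpNM : continuous (fun z : R^o => expR (- l * z)).
  move=> z; apply: continuous_comp; last exact: continuous_expR.
  by apply: continuousM => //; apply: (@continuousN _ R^o); exact: cst_continuous.
rewrite integral_itv_obnd_cbnd; last first.
  by apply/measurable_EFinP/measurable_funTS; exact: measurable_exponential_pdf.
rewrite (@ge0_continuous_FTC2y _ _ (fun x => - expR (- l * x)) _ 0) //.
- by rewrite EFinN oppeK add0e.
- by move=> x _; apply: exponential_pdf_ge0; exact: ltW.
- apply: (@continuous_subspaceW R^o _ _ [set` `[0, +oo[%R]).
    by apply: subset_itvr; rewrite bnd_simp.
  exact: within_continuous_exponential_pdf.
- rewrite -oppr0; apply: cvgN.
  rewrite (_ : (fun x => expR (- l * x)) =
               (fun z => expR (- z)) \o (fun z => l * z)); last first.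
    by apply: eq_fun => x; rewrite mulNr.
  apply: (@cvg_comp _ _ _ _ _ _ (pinfty_nbhs R)); last exact: cvgr_expR.
  exact: gt0_cvgMry.
- by apply: cvgN; apply/cvg_at_right_filter; exact: cexpNM.
- move=> x; rewrite in_itv /= andbT => ax.
  by apply: derive1_exponential_pdf; rewrite in_itv /= andbT (le_lt_trans a_ge0 ax).
Qed.

Definition tail_if (b : bool) (y : R) : set R :=
  if b then `]y, +oo[%classic else setT.

Lemma measurable_tail_if b y : measurable (tail_if b y).
Proof. by rewrite /tail_if; case: b. Qed.

Lemma prod_exponential_pdf_tail_if {I : finType} (b : I -> bool) (y : I -> R)
    (l : R) : (forall i, 0 <= y i) -> 0 < l ->
  (\prod_i \int[mu]_(w in tail_if (b i) (y i)) (exponential_pdf l w)%:E)%E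
   = (expR (- l * \sum_i (b i)%:R * y i))%:E.
Proof.
move=> y_ge0 l_gt0; rewrite mulr_sumr expR_sum -prodEFin.
apply: eq_bigr => i _; rewrite /tail_if; case: (b i).
  by rewrite exponential_pdf_tail // mul1r.
by rewrite integral_exponential_pdf // mul0r mulr0 expR0.
Qed.

End exponential_tails.

Section gamma_laplace.
Context {R : realType}.
Local Notation mu := (@lebesgue_measure R).

Definition gamma_weight (g u : R) : R :=
  if 0 < u then u `^ (g - 1) * expR (- u) else 0.

Definition gamma_mass (g : R) : \bar R := (\int[mu]_u (gamma_weight g u)%:E)%E.

Lemma gamma_weight_ge0 g u : 0 <= gamma_weight g u.
Proof.
by rewrite /gamma_weight; case: ifP => // _; rewrite mulr_ge0 ?powR_ge0 ?expR_ge0.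
Qed.

Lemma measurable_gamma_weight g : measurable_fun setT (gamma_weight g).
Proof.
apply: measurable_fun_ifT; first exact: measurable_fun_ltr.
  apply: measurable_funM; first exact: measurable_powR.
  by apply: measurableT_comp; [exact: measurable_expR | exact: measurable_funN].
exact: measurable_cst.
Qed.

Lemma Gamma_funE g : Gamma_fun g = fine (gamma_mass g).
Proof.
rewrite /Gamma_fun integral_mkcond; congr fine; apply: eq_integral => u _.
rewrite patchE /gamma_weight; case: ifPn => [/set_mem|u_out].
  by rewrite /= in_itv /= andbT => ->.
case: ifPn => // u_gt0; case/negP: u_out; apply/mem_set.
by rewrite /= in_itv /= andbT.
Qed.

Lemma gamma_pdfE g l : gamma_pdf g l = gamma_weight g l / Gamma_fun g.
Proof. by rewrite /gamma_pdf /gamma_weight; case: ifP; rewrite ?mul0r. Qed.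

Lemma gamma_weight_dilation g s l : 0 <= s ->
  gamma_weight g l * expR (- l * s) =
  (1 + s) `^ (1 - g) * gamma_weight g ((1 + s) * l).
Proof.
move=> s_ge0; have s1_gt0 : 0 < 1 + s by rewrite ltr_pwDl.
rewrite /gamma_weight pmulr_rgt0 //; case: ifP => l_gt0; last by rewrite mul0r mulr0.
rewrite (powRM _ (ltW s1_gt0) (ltW l_gt0)) !mulrA -powRD; last first.
  by rewrite (lt0r_neq0 s1_gt0) implybT.
have -> : 1 - g + (g - 1) = 0 by ring.
have -> : - ((1 + s) * l) = - l + - l * s by ring.
by rewrite powRr0 expRD; ring.
Qed.

Lemma laplace_gamma_pdf g s : 0 <= s ->
  (\int[mu]_l (gamma_pdf g l * expR (- l * s))%:E =
   ((1 + s) `^ (- g) / Gamma_fun g)%:E * gamma_mass g)%E.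
Proof.
move=> s_ge0; have s1_gt0 : 0 < 1 + s by rewrite ltr_pwDl.
have Gamma_ge0 : 0 <= Gamma_fun g.
  by rewrite Gamma_funE fine_ge0 // integral_ge0 // => u _; rewrite lee_fin gamma_weight_ge0.
pose C := (1 + s) `^ (1 - g) / Gamma_fun g.
have C_ge0 : 0 <= C by rewrite divr_ge0 ?powR_ge0.
transitivity (\int[mu]_l (C%:E * (gamma_weight g ((1 + s) * l))%:E))%E.
  apply: eq_integral => l _.
  by rewrite -EFinM gamma_pdfE mulrAC gamma_weight_dilation // mulrAC.
rewrite ge0_integralZl_EFin //; last 2 first.
- by move=> x _; rewrite lee_fin gamma_weight_ge0.
- apply/measurable_EFinP; apply: measurableT_comp; first exact: measurable_gamma_weight.
  exact: mulrl_measurable.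
rewrite (ge0_integral_dilation _ s1_gt0 (fun u => (gamma_weight g u)%:E)); last 2 first.
- by apply/measurable_EFinP; exact: measurable_gamma_weight.
- by move=> u; rewrite lee_fin gamma_weight_ge0.
rewrite muleA -EFinM /C mulrAC -powR_inv1 ?(ltW s1_gt0) // -powRD; last first.
  by rewrite (lt0r_neq0 s1_gt0) implybT.
by rewrite addrAC subrr sub0r.
Qed.

End gamma_laplace.

Lemma prod_inv_fine_mule_eq1 {R : realType} {I : finType} (x : I -> \bar R) :
  (\prod_i (((fine (x i))^-1)%:E * x i) = 1)%E ->
  forall i, (((fine (x i))^-1)%:E * x i = 1)%E.
Proof.
move=> prod1 i.
have : (((fine (x i))^-1)%:E * x i = 0 \/ ((fine (x i))^-1)%:E * x i = 1)%E.
  case: (x i) => [r| |] /=; try by left; rewrite invr0 mul0e.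
  have [->|r0] := eqVneq r 0; first by left; rewrite invr0 mul0e.
  by right; rewrite -EFinM mulVf.
case=> // xi0; move: prod1; rewrite (bigD1 i) //= xi0 mul0e => zero_eq1.
by have := @lte01 R; rewrite -zero_eq1 ltxx.
Qed.

Lemma lt_mule_bigmin {R : realType} {I : finType} (b : I -> bool) (w : I -> R)
    (s x : R) : 0 < s ->
  (x%:E < s%:E * \big[Order.min/+oo]_(j | b j) (w j)%:E)%E <->
  (forall j, tail_if (b j) (x / s) (w j)).
Proof.
move=> s_gt0; rewrite -lte_pdivrMl // -EFinM mulrC; split.
  move=> /bigmin_gtP [_ gt_w] j; rewrite /tail_if; case: ifP => // bj.
  by have := gt_w j bj; rewrite lte_fin /= in_itv /= andbT.
move=> tail_w; apply/bigmin_gtP; split; first exact: ltry.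
by move=> j bj; have := tail_w j; rewrite /tail_if bj /= in_itv /= andbT lte_fin.
Qed.

Section gamma_exponential_mixture.
Context {R : realType} {d : measure_display} {T : measurableType d}.
Context {P : probability T R} {n : nat} {gam : 'I_n.+1 -> R}.
Context {Lam : 'I_n.+1 -> {RV P >-> R}} {W : 'I_n -> 'I_n.+1 -> {RV P >-> R}}.
Hypothesis law : forall (A : 'I_n.+1 -> set R) (B : 'I_n -> 'I_n.+1 -> set R),
  (forall j, measurable (A j)) -> (forall i j, measurable (B i j)) ->
  P [set t | (forall j, A j (Lam j t)) /\ (forall i j, B i j (W i j t))] =
  (\prod_(j < n.+1)
     \int[lebesgue_measure]_(l in A j)
       ((gamma_pdf (gam j) l)%:E *
        \prod_(i < n)
          \int[lebesgue_measure]_(w in B i j) (exponential_pdf l w)%:E))%E.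

Lemma law_tails (b : 'I_n -> 'I_n.+1 -> bool) (y : 'I_n -> R) :
  (forall i, 0 <= y i) ->
  P [set t | forall i j, tail_if (b i j) (y i) (W i j t)] =
  (\prod_(j < n.+1) (((1 + \sum_(i < n) (b i j)%:R * y i) `^ (- gam j)
                      / Gamma_fun (gam j))%:E * gamma_mass (gam j)))%E.
Proof.
move=> y_ge0.
have -> : [set t | forall i j, tail_if (b i j) (y i) (W i j t)] =
    [set t | (forall j, setT (Lam j t)) /\
             (forall i j, tail_if (b i j) (y i) (W i j t))].
  by apply/seteqP; split => t /= => [|[]//].
rewrite (law (fun=> setT) (fun i j => tail_if (b i j) (y i))) //; last first.
  by move=> i j; exact: measurable_tail_if.
apply: eq_bigr => j _; rewrite -laplace_gamma_pdf; last first.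
  by apply: sumr_ge0 => i _; rewrite mulr_ge0 ?ler0n.
apply: eq_integral => l _; have [l_gt0|l_le0] := ltP 0 l.
  by rewrite prod_exponential_pdf_tail_if // EFinM.
by rewrite /gamma_pdf ltNge l_le0 /= !mul0r mul0e.
Qed.

Lemma gamma_mass_normalized j :
  (((Gamma_fun (gam j))^-1)%:E * gamma_mass (gam j) = 1)%E.
Proof.
rewrite Gamma_funE; apply: (prod_inv_fine_mule_eq1 (fun j => gamma_mass (gam j)) _ j).
have := law_tails (fun _ _ => false) (fun _ => 0) (fun _ => lexx 0).
rewrite (_ : [set t | _] = setT); last by apply/seteqP; split.
rewrite probability_setT => /esym; apply: etrans; apply: eq_bigr => k _.
by rewrite big1 ?addr0 ?powR1 ?mul1r ?Gamma_funE // => i _; rewrite mul0r.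
Qed.

End gamma_exponential_mixture.

Theorem theorem4p1 (R : realType) (d : measure_display) (T : measurableType d)
  (P : probability T R) (n : nat)
  (c : 'I_n -> 'I_n.+1 -> bool)
  (sigma : 'I_n -> R) (gam : 'I_n.+1 -> R)
  (Lam : 'I_n.+1 -> {RV P >-> R})
  (W : 'I_n -> 'I_n.+1 -> {RV P >-> R}) :
  (forall i, 0 < sigma i) ->
  (forall j, 0 < gam j) ->
  (forall i, 0 < \sum_(j < n.+1) (c i j)%:R * gam j) ->
  (* joint law of (Lam, W): the Lam_j are independent Ga(gam_j, 1), and
     conditionally on Lam = lam the W_{i,j} are independent Exp(lam_j) *)
  (forall (A : 'I_n.+1 -> set R) (B : 'I_n -> 'I_n.+1 -> set R),
     (forall j, measurable (A j)) -> (forall i j, measurable (B i j)) ->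
     P [set t | (forall j, A j (Lam j t)) /\ (forall i j, B i j (W i j t))] =
     (\prod_(j < n.+1)
        \int[lebesgue_measure]_(l in A j)
          ((gamma_pdf (gam j) l)%:E *
           \prod_(i < n)
             \int[lebesgue_measure]_(w in B i j) (exponential_pdf l w)%:E))%E) ->
  let X := fun (i : 'I_n) (t : T) =>
    ((sigma i)%:E * \big[Order.min/+oo]_(j < n.+1 | c i j) (W i j t)%:E)%E in
  forall x : 'I_n -> R, (forall i, 0 < x i) ->
    P [set t | forall i, ((x i)%:E < X i t)%E] =
    (\prod_(j < n.+1)
       (1 + \sum_(i < n) (c i j)%:R / sigma i * x i) `^ (- gam j))%:E.
Proof.
move=> sigma_gt0 _ _ law X x x_gt0.
have -> : [set t | forall i, ((x i)%:E < X i t)%E] =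
    [set t | forall i j, tail_if (c i j) (x i / sigma i) (W i j t)].
  by apply/seteqP; split => t /= survive i; apply/lt_mule_bigmin.
rewrite (law_tails law); last by move=> i; rewrite divr_ge0 // ltW.
rewrite -prodEFin; apply: eq_bigr => j _.
rewrite EFinM -muleA (gamma_mass_normalized law) mule1.
by under eq_bigr do rewrite mulrA mulrAC.
Qed.
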